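(* Let $A$ be a finite, connected, directly irreducible poset. Let $B$ and $P$ be posets (not assumed finite) with $P\neq\emptyset$. If $A\cong\mathcal C(B^P)$, then $P$ is finite and connected, and $B$ is finite, connected, and directly irreducible.
   Context: For posets $P$ and $Q$, $P^Q$ denotes the set of order-preserving maps $Q\to P$, ordered pointwise: $f\le g$ iff $f(q)\le g(q)$ in $P$ for all $q\in Q$. For elements $x,y$ of a poset, $x\equiv y$ means $x$ and $y$ lie in the same connected component. $\mathcal D(P^Q)$ is the set of $g\in P^Q$ that are constant on each connected component of $Q$. For $Q\neq\emptyset$, $\mathcal C(P^Q)=\{f\in P^Q\mid f\equiv g \text{ in } P^Q \text{ for some } g\in\mathcal D(P^Q)\}$, viewed as a subposet of $P^Q$. A poset $P$ is directly irreducible if $|P|\neq 1$ and whenever $P\cong S\times T$ for posets $S,T$, then $|S|=1$ or $|T|=1$. *)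

From Stdlib Require Import List Relations FunctionalExtensionality ProofIrrelevance.

Record Poset := {
  carrier :> Type;
  le : carrier -> carrier -> Prop;
  le_refl : forall x, le x x;
  le_antisym : forall x y, le x y -> le y x -> x = y;
  le_trans : forall x y z, le x y -> le y z -> le x z
}.
Arguments le {p} _ _.

Definition sub_carrier (P : Poset) (S : P -> Prop) := {x : P | S x}.

Lemma sub_antisym (P : Poset) (S : P -> Prop) (x y : sub_carrier P S) :
  le (proj1_sig x) (proj1_sig y) -> le (proj1_sig y) (proj1_sig x) -> x = y.
Proof.
  destruct x as [x hx], y as [y hy]; simpl; intros h1 h2.
  pose proof (le_antisym P x y h1 h2) as e; subst y.
  f_equal; apply proof_irrelevance.
Qed.

Definition SubPoset (P : Poset) (S : P -> Prop) : Poset :=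
  {| carrier := sub_carrier P S;
     le := fun x y => le (proj1_sig x) (proj1_sig y);
     le_refl := fun x => le_refl P (proj1_sig x);
     le_antisym := sub_antisym P S;
     le_trans := fun x y z => le_trans P (proj1_sig x) (proj1_sig y) (proj1_sig z) |}.

Definition monotone (Q P : Poset) (f : Q -> P) : Prop :=
  forall q q', le q q' -> le (f q) (f q').

(* P^Q : order-preserving maps Q -> P, ordered pointwise *)
Definition fun_carrier (P Q : Poset) := {f : Q -> P | monotone Q P f}.

Lemma fun_antisym (P Q : Poset) (f g : fun_carrier P Q) :
  (forall q, le (proj1_sig f q) (proj1_sig g q)) ->
  (forall q, le (proj1_sig g q) (proj1_sig f q)) -> f = g.
Proof.
  destruct f as [f hf], g as [g hg]; simpl; intros h1 h2.
  assert (e : f = g).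
  { apply functional_extensionality; intro q; apply le_antisym; auto. }
  subst g; f_equal; apply proof_irrelevance.
Qed.

Definition FunPoset (P Q : Poset) : Poset :=
  {| carrier := fun_carrier P Q;
     le := fun f g => forall q, le (proj1_sig f q) (proj1_sig g q);
     le_refl := fun f q => le_refl P (proj1_sig f q);
     le_antisym := fun_antisym P Q;
     le_trans := fun f g h H1 H2 q =>
       le_trans P _ _ _ (H1 q) (H2 q) |}.

(* x ≡ y : same connected component (equivalence closure of comparability) *)
Definition same_comp (P : Poset) : P -> P -> Prop :=
  clos_refl_sym_trans P (@le P).

Definition in_D (P Q : Poset) (g : FunPoset P Q) : Prop :=
  forall q q', same_comp Q q q' -> proj1_sig g q = proj1_sig g q'.

Definition CPoset (P Q : Poset) : Poset :=
  SubPoset (FunPoset P Q)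
    (fun f => exists g, in_D P Q g /\ same_comp (FunPoset P Q) f g).

Definition ProdPoset (S T : Poset) : Poset.
Proof.
  refine {| carrier := (S * T)%type;
            le := fun x y => le (fst x) (fst y) /\ le (snd x) (snd y) |}.
  - intros [a b]; split; apply le_refl.
  - intros [a b] [c d] [h1 h2] [h3 h4]; simpl in *.
    f_equal; apply le_antisym; assumption.
  - intros [a b] [c d] [e f] [h1 h2] [h3 h4]; simpl in *.
    split; eapply le_trans; eassumption.
Defined.

Definition poset_iso (S T : Poset) : Prop :=
  exists f : S -> T,
    (forall x y, le x y <-> le (f x) (f y)) /\ (forall y, exists x, f x = y).

Definition finite_poset (P : Poset) : Prop := exists l : list P, forall x, In x l.

Definition singleton_poset (P : Poset) : Prop := exists x : P, forall y : P, y = x.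

Definition connected_poset (P : Poset) : Prop :=
  inhabited P /\ forall x y : P, same_comp P x y.

Definition directly_irreducible (P : Poset) : Prop :=
  ~ singleton_poset P /\
  forall S T : Poset, poset_iso P (ProdPoset S T) ->
    singleton_poset S \/ singleton_poset T.

From Stdlib Require Import List Relations ProofIrrelevance Classical ClassicalEpsilon FinFun.

(* Evaluation at a point of P and constant maps exhibit B as a monotone retract
   of C(B^P), which transfers non-triviality, connectedness and finiteness from
   C(B^P) to B.  A decomposition B = S x T lifts pointwise to
   C(B^P) = C(S^P) x C(T^P), and a union K of components of P splits C(B^P) as
   the product of the maps that equal a fixed b0 off K and those that equal b0
   on K; both factors are non-trivial as soon as K and its complement are
   nonempty, so direct irreducibility forces B irreducible and P connected.
   Finally, for bl < bh in B, the maps sending the principal up-set of p to bh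
   and everything else to bl lie in C(B^P) and are pairwise distinct, so P is
   finite. *)

Lemma same_comp_monotone {X Y : Poset} (h : X -> Y) :
  monotone X Y h -> forall x x', same_comp X x x' -> same_comp Y (h x) (h x').
Proof.
  intros h_mono x x' xx'; induction xx'.
  - apply rst_step, h_mono; assumption.
  - apply rst_refl.
  - apply rst_sym; assumption.
  - eapply rst_trans; eassumption.
Qed.

Lemma Finite_surjective {X Y : Type} (f : X -> Y) : Surjective f -> Finite X -> Finite Y.
Proof.
  intros f_surj [l l_full]; exists (map f l); intro y.
  destruct (f_surj y) as [x <-]; apply in_map, l_full.
Qed.

Lemma Finite_injective {X Y : Type} (f : X -> Y) : Injective f -> Finite Y -> Finite X.
Proof.
  intros f_inj [l l_full].
  pose (preimage y :=
    match excluded_middle_informative (exists x, f x = y) with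
    | left ex => proj1_sig (constructive_indefinite_description _ ex) :: nil
    | right _ => nil
    end).
  exists (flat_map preimage l); intro x; apply in_flat_map.
  exists (f x); split; [apply l_full|].
  unfold preimage; destruct excluded_middle_informative as [ex|no_ex].
  - destruct constructive_indefinite_description as [x' fx']; left; apply f_inj, fx'.
  - exfalso; apply no_ex; exists x; reflexivity.
Qed.

Lemma poset_iso_trans {X Y Z : Poset} : poset_iso X Y -> poset_iso Y Z -> poset_iso X Z.
Proof.
  intros [f [f_emb f_surj]] [g [g_emb g_surj]]; exists (fun x => g (f x)); split.
  - intros x x'; rewrite f_emb, g_emb; reflexivity.
  - intro z; destruct (g_surj z) as [y <-], (f_surj y) as [x <-]; exists x; reflexivity.
Qed.

Lemma poset_iso_singleton {X Y : Poset} :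
  poset_iso X Y -> singleton_poset Y -> singleton_poset X.
Proof.
  intros [f [f_emb f_surj]] [y y_unique]; destruct (f_surj y) as [x _].
  exists x; intro x'.
  apply le_antisym; apply f_emb; rewrite (y_unique (f x')), (y_unique (f x)); apply le_refl.
Qed.

Lemma connected_poset_surjective {X Y : Poset} (h : X -> Y) :
  monotone X Y h -> Surjective h -> connected_poset X -> connected_poset Y.
Proof.
  intros h_mono h_surj [[x0] X_conn]; split; [exact (inhabits (h x0))|].
  intros y y'; destruct (h_surj y) as [x <-], (h_surj y') as [x' <-].
  apply same_comp_monotone; auto.
Qed.

Lemma poset_iso_finite {X Y : Poset} : poset_iso X Y -> finite_poset X -> finite_poset Y.
Proof. intros [f [_ f_surj]]; exact (Finite_surjective f f_surj). Qed.

Lemma poset_iso_connected {X Y : Poset} :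
  poset_iso X Y -> connected_poset X -> connected_poset Y.
Proof.
  intros [f [f_emb f_surj]]; apply (connected_poset_surjective f); [|exact f_surj].
  intros x x'; apply f_emb.
Qed.

Lemma poset_iso_directly_irreducible {X Y : Poset} :
  poset_iso X Y -> directly_irreducible X -> directly_irreducible Y.
Proof.
  intros iso [X_nsing X_irr]; split.
  - intro Y_sing; exact (X_nsing (poset_iso_singleton iso Y_sing)).
  - intros S T iso'; exact (X_irr S T (poset_iso_trans iso iso')).
Qed.

Lemma connected_nonsingleton_lt {X : Poset} :
  connected_poset X -> ~ singleton_poset X -> exists x y : X, le x y /\ x <> y.
Proof.
  intros [[x0] X_conn] X_nsing; apply NNPP; intro no_lt; apply X_nsing.
  exists x0; intro y; induction (X_conn y x0) as [x x' xx'| | |].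
  - apply NNPP; intro ne; apply no_lt; exists x, x'; split; assumption.
  - reflexivity.
  - symmetry; assumption.
  - congruence.
Qed.

Definition in_C (B P : Poset) (f : FunPoset B P) : Prop :=
  exists g, in_D B P g /\ same_comp (FunPoset B P) f g.

Definition fn {B P : Poset} (f : CPoset B P) : P -> B := proj1_sig (proj1_sig f).

Lemma CPoset_ext {B P : Poset} (f g : CPoset B P) : (forall q, fn f q = fn g q) -> f = g.
Proof.
  unfold fn; intro fg; apply le_antisym; intro q; rewrite fg; apply le_refl.
Qed.

Definition constF (B P : Poset) (b : B) : FunPoset B P :=
  exist (monotone P B) (fun _ => b) (fun _ _ _ => le_refl B b).

Lemma constF_in_C (B P : Poset) (b : B) : in_C B P (constF B P b).
Proof. exists (constF B P b); split; [intros q q' _; reflexivity | apply rst_refl]. Qed.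

Definition constC (B P : Poset) (b : B) : CPoset B P := exist _ _ (constF_in_C B P b).

(* Pointwise operations that may depend on the point only through its
   component preserve C(-^P); projections, pairings and gluings along unions
   of components are all of this form. *)
Section Combine.
Variables (X Y Z P : Poset) (h : P -> X -> Y -> Z).
Hypothesis h_monotone :
  forall q x x' y y', le x x' -> le y y' -> le (h q x y) (h q x' y').
Hypothesis h_local : forall q q' x y, same_comp P q q' -> h q x y = h q' x y.

Definition combine (f : FunPoset X P) (g : FunPoset Y P) (q : P) : Z :=
  h q (proj1_sig f q) (proj1_sig g q).

Lemma combine_monotone f g : monotone P Z (combine f g).
Proof.
  intros q q' qq'; unfold combine.
  rewrite (h_local q q'); [|apply rst_step; exact qq'].
  apply h_monotone; [apply (proj2_sig f) | apply (proj2_sig g)]; exact qq'.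
Qed.

Definition combineF f g : FunPoset Z P := exist _ (combine f g) (combine_monotone f g).

Lemma combineF_in_D f g : in_D X P f -> in_D Y P g -> in_D Z P (combineF f g).
Proof.
  intros f_D g_D q q' qq'; simpl; unfold combine.
  rewrite (f_D q q' qq'), (g_D q q' qq'); apply h_local; exact qq'.
Qed.

Lemma combineF_in_C f g : in_C X P f -> in_C Y P g -> in_C Z P (combineF f g).
Proof.
  intros [f' [f'_D ff']] [g' [g'_D gg']].
  exists (combineF f' g'); split; [apply combineF_in_D; assumption|].
  apply rst_trans with (combineF f' g).
  - apply (same_comp_monotone (fun u => combineF u g)); [|exact ff'].
    intros u u' uu' q; apply h_monotone; [apply uu' | apply le_refl].
  - apply (same_comp_monotone (combineF f')); [|exact gg'].
    intros v v' vv' q; apply h_monotone; [apply le_refl | apply vv'].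
Qed.

Definition combineC (f : CPoset X P) (g : CPoset Y P) : CPoset Z P :=
  exist _ _ (combineF_in_C _ _ (proj2_sig f) (proj2_sig g)).

Lemma fn_combineC f g q : fn (combineC f g) q = h q (fn f q) (fn g q).
Proof. reflexivity. Qed.

End Combine.

Arguments combineC {X Y Z P} h h_monotone h_local f g.
Arguments fn_combineC {X Y Z P} h h_monotone h_local f g q.

Definition mapC {X Y P : Poset} (k : X -> Y) (k_mono : monotone X Y k)
    (f : CPoset X P) : CPoset Y P :=
  combineC (fun _ x _ => k x) (fun _ _ _ _ _ xx' _ => k_mono _ _ xx')
    (fun _ _ _ _ _ => eq_refl) f f.

Section Base.
Variables (B P : Poset) (p0 : P).

Lemma CPoset_singleton : singleton_poset (CPoset B P) <-> singleton_poset B.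
Proof.
  split.
  - intros [f f_unique]; exists (fn f p0); intro b.
    exact (f_equal (fun g => fn g p0) (f_unique (constC B P b))).
  - intros [b b_unique]; exists (constC B P b); intro f.
    apply CPoset_ext; intro q; apply b_unique.
Qed.

Lemma CPoset_connected_base : connected_poset (CPoset B P) -> connected_poset B.
Proof.
  apply (connected_poset_surjective (fun f : CPoset B P => fn f p0)).
  - intros f g fg; apply fg.
  - intro b; exists (constC B P b); reflexivity.
Qed.

Lemma CPoset_finite_base : finite_poset (CPoset B P) -> finite_poset B.
Proof.
  apply (Finite_injective (constC B P)).
  intros b b' bb'; exact (f_equal (fun f => fn f p0) bb').
Qed.

End Base.

Lemma CPoset_prod_iso (B S T P : Poset) :
  poset_iso B (ProdPoset S T) ->
  poset_iso (CPoset B P) (ProdPoset (CPoset S P) (CPoset T P)).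
Proof.
  intros [beta [beta_emb beta_surj]].
  destruct (choice (fun y x => beta x = y) beta_surj) as [gam beta_gam].
  assert (fst_mono : monotone B S (fun b => fst (beta b))).
  { intros b b' bb'; apply beta_emb in bb'; apply bb'. }
  assert (snd_mono : monotone B T (fun b => snd (beta b))).
  { intros b b' bb'; apply beta_emb in bb'; apply bb'. }
  assert (gam_mono : forall (_ : P) (s s' : S) (t t' : T), le s s' -> le t t' ->
            le (gam (s, t)) (gam (s', t'))).
  { intros _ s s' t t' ss' tt'; apply beta_emb; rewrite !beta_gam; split; assumption. }
  exists (fun f => (mapC _ fst_mono f, mapC _ snd_mono f)); split.
  - intros f g; split.
    + intro fg; split; intro q; apply (beta_emb _ _), fg.
    + intros [fg1 fg2] q; apply beta_emb; split; [apply fg1 | apply fg2].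
  - intros [s t].
    exists (combineC (fun (_ : P) x y => gam (x, y)) gam_mono (fun _ _ _ _ _ => eq_refl) s t).
    f_equal; apply CPoset_ext; intro q; unfold mapC; rewrite !fn_combineC, beta_gam;
      reflexivity.
Qed.

Lemma CPoset_irreducible_base (B P : Poset) (p0 : P) :
  directly_irreducible (CPoset B P) -> directly_irreducible B.
Proof.
  intros [C_nsing C_irr]; split.
  - intro B_sing; exact (C_nsing (proj2 (CPoset_singleton B P p0) B_sing)).
  - intros S T iso.
    destruct (C_irr _ _ (CPoset_prod_iso B S T P iso)) as [C_sing | C_sing];
      [left | right]; exact (proj1 (CPoset_singleton _ P p0) C_sing).
Qed.

Section UpIndicator.
Variables (B P : Poset) (bl bh : B).
Hypotheses (bl_le_bh : le bl bh) (bl_neq_bh : bl <> bh).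

Definition up_indicator (p q : P) : B :=
  if excluded_middle_informative (le p q) then bh else bl.

Lemma up_indicator_monotone p : monotone P B (up_indicator p).
Proof.
  intros q q' qq'; unfold up_indicator.
  destruct (excluded_middle_informative (le p q)) as [pq|npq];
    destruct (excluded_middle_informative (le p q')) as [pq'|npq'].
  - apply le_refl.
  - exfalso; exact (npq' (le_trans P _ _ _ pq qq')).
  - exact bl_le_bh.
  - apply le_refl.
Qed.

Lemma up_indicator_in_C p : in_C B P (exist _ _ (up_indicator_monotone p)).
Proof.
  exists (constF B P bl); split; [intros q q' _; reflexivity|].
  apply rst_sym, rst_step; intro q; simpl; unfold up_indicator.
  destruct excluded_middle_informative; [exact bl_le_bh | apply le_refl].
Qed.

Definition upC (p : P) : CPoset B P := exist _ _ (up_indicator_in_C p).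

Lemma le_of_up_indicator p q : up_indicator p q = bh -> le p q.
Proof.
  unfold up_indicator; destruct excluded_middle_informative as [pq|_]; [trivial|].
  intro; contradiction.
Qed.

Lemma upC_injective : Injective upC.
Proof.
  intros p p' pp'.
  assert (same_values : forall q, up_indicator p q = up_indicator p' q).
  { intro q; exact (f_equal (fun f => fn f q) pp'). }
  assert (at_self : forall q, up_indicator q q = bh).
  { intro q; unfold up_indicator; destruct excluded_middle_informative as [_|nqq];
      [reflexivity | destruct (nqq (le_refl P q))]. }
  apply le_antisym; apply le_of_up_indicator; [rewrite same_values | rewrite <- same_values];
    apply at_self.
Qed.

Lemma CPoset_finite_exponent : finite_poset (CPoset B P) -> finite_poset P.
Proof. exact (Finite_injective upC upC_injective). Qed.

End UpIndicator.

Definition select {P Z : Type} (K : P -> Prop) (q : P) (x y : Z) : Z :=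
  if excluded_middle_informative (K q) then x else y.

Lemma select_in {P Z : Type} (K : P -> Prop) q (x y : Z) : K q -> select K q x y = x.
Proof. unfold select; destruct excluded_middle_informative; tauto. Qed.

Lemma select_out {P Z : Type} (K : P -> Prop) q (x y : Z) : ~ K q -> select K q x y = y.
Proof. unfold select; destruct excluded_middle_informative; tauto. Qed.

Lemma select_monotone {P : Type} {B : Poset} (K : P -> Prop) q (x x' y y' : B) :
  le x x' -> le y y' -> le (select K q x y) (select K q x' y').
Proof. unfold select; destruct excluded_middle_informative; tauto. Qed.

Section Split.
Variables (B P : Poset) (K : P -> Prop) (b0 : B).
Hypothesis K_closed : forall q q', same_comp P q q' -> (K q <-> K q').

Lemma select_local q q' (x y : B) : same_comp P q q' -> select K q x y = select K q' x y.
Proof.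
  intro qq'; destruct (classic (K q)) as [Kq|nKq].
  - rewrite !select_in; [reflexivity | apply (K_closed q q' qq') | ]; exact Kq.
  - rewrite !select_out; [reflexivity | rewrite <- (K_closed q q' qq') | ]; exact nKq.
Qed.

Lemma compl_closed q q' : same_comp P q q' -> (~ K q <-> ~ K q').
Proof. intro qq'; rewrite (K_closed q q' qq'); reflexivity. Qed.

Definition glueC (f g : CPoset B P) : CPoset B P :=
  combineC (select K) (select_monotone K) select_local f g.

Definition CPoset_fixed_off : Poset :=
  SubPoset (CPoset B P) (fun f => forall q, ~ K q -> fn f q = b0).

Lemma glueC_fixed_off f q : ~ K q -> fn (glueC f (constC B P b0)) q = b0.
Proof. intro nKq; unfold glueC; rewrite fn_combineC; apply select_out, nKq. Qed.

Lemma CPoset_fixed_off_singleton q :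
  K q -> singleton_poset CPoset_fixed_off -> singleton_poset B.
Proof.
  intros Kq [s s_unique]; exists (fn (proj1_sig s) q); intro b.
  pose proof (s_unique (exist _ _ (glueC_fixed_off (constC B P b)))) as glue_s.
  apply (f_equal (fun z => fn (proj1_sig z) q)) in glue_s; simpl in glue_s.
  unfold glueC in glue_s; rewrite fn_combineC, select_in in glue_s; assumption.
Qed.

End Split.

Lemma CPoset_split_iso (B P : Poset) (K : P -> Prop) (b0 : B)
    (K_closed : forall q q', same_comp P q q' -> (K q <-> K q')) :
  poset_iso (CPoset B P)
    (ProdPoset (CPoset_fixed_off B P K b0) (CPoset_fixed_off B P (fun q => ~ K q) b0)).
Proof.
  pose (nK_closed := compl_closed P K K_closed).
  exists (fun f => (exist _ _ (glueC_fixed_off B P K b0 K_closed f),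
                    exist _ _ (glueC_fixed_off B P _ b0 nK_closed f))); split.
  - intros f g; split.
    + intro fg; split; intro q; apply select_monotone;
        [apply fg | apply le_refl | apply fg | apply le_refl].
    + intros [fg_in fg_out] q; specialize (fg_in q); specialize (fg_out q).
      change (le (select K q (fn f q) b0) (select K q (fn g q) b0)) in fg_in.
      change (le (select (fun q => ~ K q) q (fn f q) b0)
                 (select (fun q => ~ K q) q (fn g q) b0)) in fg_out.
      change (le (fn f q) (fn g q)).
      destruct (classic (K q)) as [Kq|nKq].
      * rewrite !select_in in fg_in; assumption.
      * rewrite !select_in in fg_out; assumption.
  - intros [[s s_off] [t t_off]].
    exists (glueC B P K K_closed s t).
    f_equal; apply subset_eq_compat, CPoset_ext; intro q; unfold glueC; rewrite !fn_combineC;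
      destruct (classic (K q)) as [Kq|nKq].
    + rewrite !select_in; trivial.
    + rewrite select_out by assumption; symmetry; apply s_off, nKq.
    + rewrite select_out by tauto; symmetry; apply t_off; tauto.
    + rewrite select_in, select_out by assumption; reflexivity.
Qed.

Lemma CPoset_connected_exponent (B P : Poset) :
  inhabited B -> inhabited P -> directly_irreducible (CPoset B P) -> connected_poset P.
Proof.
  intros [b0] [p0] [C_nsing C_irr]; split; [constructor; exact p0|].
  intros x y; apply NNPP; intro xy_apart.
  assert (K_closed : forall q q', same_comp P q q' -> (same_comp P x q <-> same_comp P x q')).
  { intros q q' qq'; split; intro xq; eapply rst_trans;
      [exact xq | exact qq' | exact xq | apply rst_sym, qq']. }
  apply C_nsing, (CPoset_singleton B P p0).
  destruct (C_irr _ _ (CPoset_split_iso B P _ b0 K_closed)) as [off_K | off_nK].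
  - exact (CPoset_fixed_off_singleton B P _ b0 K_closed x (rst_refl _ _ x) off_K).
  - exact (CPoset_fixed_off_singleton B P _ b0 (compl_closed P _ K_closed) y xy_apart off_nK).
Qed.

Theorem lemma6 (A B P : Poset) :
  finite_poset A -> connected_poset A -> directly_irreducible A ->
  inhabited P ->
  poset_iso A (CPoset B P) ->
  finite_poset P /\ connected_poset P /\
  finite_poset B /\ connected_poset B /\ directly_irreducible B.
Proof.
  intros A_fin A_conn A_irr [p0] iso.
  pose proof (poset_iso_finite iso A_fin) as C_fin.
  pose proof (poset_iso_directly_irreducible iso A_irr) as C_irr.
  pose proof (CPoset_connected_base B P p0 (poset_iso_connected iso A_conn)) as B_conn.
  pose proof (CPoset_irreducible_base B P p0 C_irr) as B_irr.
  destruct (connected_nonsingleton_lt B_conn (proj1 B_irr)) as [bl [bh [bl_le_bh bl_neq_bh]]].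
  split; [|split; [|split; [|split]]].
  - exact (CPoset_finite_exponent B P bl bh bl_le_bh bl_neq_bh C_fin).
  - exact (CPoset_connected_exponent B P (inhabits bl) (inhabits p0) C_irr).
  - exact (CPoset_finite_base B P p0 C_fin).
  - exact B_conn.
  - exact B_irr.
Qed.
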